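(* Assume there exists a $1$-perfect code in $H(q+1,q)$. Let $f$ be a $(b,c)$-coloring of $H(n,q)$ with main eigenvalue $\lambda$ such that the set of vertices of color $1$ can be partitioned into $k$-faces, and suppose $\lambda\le k(q-1)$. Then for every positive integer $r$ and all $t_1,\dots,t_r\in\{1,\dots,q\}$ there is a $\big(q^r(b+c)-t_1\cdots t_r c,\ t_1\cdots t_r c\big)$-coloring of $H\big(q^r n+(k(q-1)-\lambda)\frac{q^r-1}{q-1},\,q\big)$ with main eigenvalue $\lambda+k(q-1)(q^r-1)$.
   Context: The Hamming graph $H(n,q)$ has vertex set $\mathbb{Z}_q^n$, two vertices adjacent iff they differ in exactly one coordinate. A $k$-face is a set of vertices obtained by fixing $n-k$ coordinates and letting the other $k$ coordinates range over $\mathbb{Z}_q$. A $(b,c)$-coloring of $H(n,q)$ is a surjective map onto $\{1,2\}$ in which each color-1 vertex has exactly $b$ neighbours of color 2 and each color-2 vertex has exactly $c$ neighbours of color 1; its main eigenvalue is $n(q-1)-(b+c)$. A $1$-perfect code in $H(n,q)$ is a set $C$ of vertices such that every radius-$1$ Hamming ball contains exactly one element of $C$. *)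

From HB Require Import structures.
From mathcomp Require Import all_boot all_order all_algebra.
Set Implicit Arguments. Unset Strict Implicit. Unset Printing Implicit Defensive.

Definition hvert (n q : nat) := {ffun 'I_n -> 'I_q}.

Definition hadj (n q : nat) (x y : hvert n q) : bool :=
  #|[set i : 'I_n | x i != y i]| == 1.

Definition is_face (n q k : nat) (F : {set hvert n q}) : Prop :=
  exists (S : {set 'I_n}) (a : hvert n q),
    #|S| = k /\ F = [set x : hvert n q | [forall i, (i \notin S) ==> (x i == a i)]].

Definition is_coloring (n q b c : nat) (f : hvert n q -> nat) : Prop :=
  (forall x, f x = 1 \/ f x = 2) /\
  (exists x, f x = 1) /\ (exists y, f y = 2) /\
  (forall x, f x = 1 -> #|[set y | hadj x y & f y == 2]| = b) /\
  (forall x, f x = 2 -> #|[set y | hadj x y & f y == 1]| = c).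

Definition main_eigenvalue (n q b c : nat) : int :=
  (n * (q - 1))%:Z - (b + c)%:Z.

Definition color1_face_partition (n q k : nat) (f : hvert n q -> nat) : Prop :=
  exists P : {set {set hvert n q}},
    partition P [set x | f x == 1] /\ (forall F, F \in P -> is_face k F).

Definition perfect_code (n q : nat) (C : {set hvert n q}) : Prop :=
  forall x : hvert n q, #|[set y in C | (y == x) || hadj x y]| = 1.

(* A perfect code in H(q+1, q) has q^(q-1) words and minimum distance 3, so every word x
   of H(q, q), extended by one coordinate, agrees outside two fixed coordinates with
   exactly one codeword c(x).  With sg x := x(a1) + c(x)(a1) and tu x := c(x)(extra),
   the map y |-> (sg y, tu y) is a bijection from the neighbours of x onto the pairs
   (s, u) with s <> sg x.

   Let f be a (b,c)-colouring of H(n, q) whose colour-1 class is a union of k-faces, and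
   m := k(q-1) - lambda.  Replace every coordinate by a block of q coordinates and add m new
   ones.  A word X gets colour 1 when the word of H(n, q) formed by the sg-values of its
   blocks has colour 1 under f and the sum mod q of the tu-values of the blocks outside the
   face directions, plus the new coordinates, is smaller than t.  Counting the neighbours
   block by block with the bijection above shows that this is a (qb + (q-t)c, tc)-colouring
   of H(qn + m, q) whose colour-1 class is a union of kq-faces, with the same m.  Iterating
   r times gives the theorem. *)

From HB Require Import structures.
From mathcomp Require Import all_boot all_order all_algebra zify.
Import GRing.Theory Num.Theory.
Set Implicit Arguments. Unset Strict Implicit. Unset Printing Implicit Defensive.

Lemma card_set_sum (T : finType) (P : pred T) : #|[set x | P x]| = \sum_x (P x : nat).
Proof. by rewrite -sum1_card big_mkcond /=; apply: eq_bigr => x _; rewrite inE. Qed.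

Lemma card_pairs (T U : finType) (P : T -> U -> bool) :
  #|[set su : T * U | P su.1 su.2]| = \sum_s #|[set u | P s u]|.
Proof.
rewrite card_set_sum -(pair_big xpredT xpredT (fun s u => (P s u : nat))) /=.
by apply: eq_bigr => s _; rewrite card_set_sum.
Qed.

Lemma card_ord_lt n t : t <= n -> #|[set i : 'I_n | i < t]| = t.
Proof.
move=> tn; have widen_inj : injective (widen_ord tn).
  by move=> i j e; apply: val_inj; exact: (congr1 val e).
rewrite -[RHS]card_ord -(card_imset _ widen_inj).
apply: eq_card => i; rewrite inE; apply/idP/imsetP => [it|[j _ ->] /=]; last exact: ltn_ord.
by exists (Ordinal it) => //; apply: val_inj.
Qed.

Lemma card_ord_neq p (s0 : 'I_p.+1) : #|[set s | s != s0]| = p.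
Proof.
transitivity #|[set~ s0]|; last by rewrite cardsC1 card_ord.
by apply: eq_card => s; rewrite !inE.
Qed.

Lemma card_shift_lt p (R : 'I_p.+1) t : t <= p.+1 -> #|[set u | (R + u)%R < t]| = t.
Proof.
move=> tq; rewrite -[RHS](card_ord_lt tq) -(card_preimset _ (addrI R)).
by apply: eq_card => u; rewrite !inE.
Qed.

(** * Hamming graphs *)

Section Hamming.
Variables (I : finType) (q : nat).
Local Notation word := {ffun I -> 'I_q}.
Implicit Types (x y z : word) (i j : I) (v : 'I_q).

Definition mismatch x y : {set I} := [set i | x i != y i].
Definition adjacent x y := #|mismatch x y| == 1.
Definition upd x i v : word := [ffun j => if j == i then v else x j].

Definition coloring (b c : nat) (f : word -> nat) : Prop :=
  (forall x, f x = 1 \/ f x = 2) /\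
  (exists x, f x = 1) /\ (exists y, f y = 2) /\
  (forall x, f x = 1 -> #|[set y | adjacent x y & f y == 2]| = b) /\
  (forall x, f x = 2 -> #|[set y | adjacent x y & f y == 1]| = c).

Definition perfect (C : {set word}) :=
  forall x, #|[set y in C | (y == x) || adjacent x y]| = 1.

Lemma updE x i v j : upd x i v j = if j == i then v else x j.
Proof. by rewrite ffunE. Qed.

Lemma upd_id x i : upd x i (x i) = x.
Proof. by apply/ffunP=> j; rewrite updE; case: eqP => [->|]. Qed.

Lemma upd_upd x i v w : upd (upd x i v) i w = upd x i w.
Proof. by apply/ffunP=> j; rewrite !updE; case: eqP. Qed.

Lemma mismatchC x y : mismatch x y = mismatch y x.
Proof. by apply/setP=> i; rewrite !inE eq_sym. Qed.

Lemma mismatchxx x : mismatch x x = set0.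
Proof. by apply/setP=> i; rewrite !inE eqxx. Qed.

Lemma mismatch_eq0 x y : (mismatch x y == set0) = (x == y).
Proof.
apply/eqP/eqP=> [xy|->]; last exact: mismatchxx.
by apply/ffunP=> i; move/setP/(_ i): xy; rewrite !inE => /negbFE/eqP.
Qed.

Lemma mismatch_upd x i v : v != x i -> mismatch x (upd x i v) = [set i].
Proof.
move=> vx; apply/setP=> j; rewrite !inE updE.
by case: (j =P i) => [->|_]; rewrite ?eqxx // eq_sym.
Qed.

Lemma mismatch_triangle x y z :
  mismatch x z \subset mismatch x y :|: mismatch y z.
Proof.
apply/subsetP=> i; rewrite !inE; apply: contraR; rewrite negb_or !negbK.
by move=> /andP[/eqP -> /eqP ->].
Qed.

Lemma adjacentC x y : adjacent x y = adjacent y x.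
Proof. by rewrite /adjacent mismatchC. Qed.

Lemma adjacent_upd x i v : v != x i -> adjacent x (upd x i v).
Proof. by move=> vx; rewrite /adjacent mismatch_upd // cards1. Qed.

Lemma adjacentP x y : adjacent x y -> exists2 i, y i != x i & y = upd x i (y i).
Proof.
move=> /cards1P[i xyi]; exists i; first by move: (set11 i); rewrite -xyi inE eq_sym.
apply/ffunP=> j; rewrite updE; case: eqP => [->//|/eqP ji].
by move/setP/(_ j): xyi; rewrite !inE (negbTE ji) => /negbFE/eqP.
Qed.

Lemma ball1E x y : (y == x) || adjacent x y = (#|mismatch x y| <= 1).
Proof.
by rewrite leq_eqVlt ltnS leqn0 cards_eq0 mismatch_eq0 eq_sym orbC.
Qed.

Lemma card_adjacent (P : pred word) x :
  #|[set y | adjacent x y & P y]| = \sum_i #|[set v | (v != x i) && P (upd x i v)]|.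
Proof.
pose D := [set iv : I * 'I_q | (iv.2 != x iv.1) && P (upd x iv.1 iv.2)].
have -> : [set y | adjacent x y & P y] = [set upd x iv.1 iv.2 | iv in D].
  apply/setP=> y; rewrite inE; apply/andP/imsetP => [[/adjacentP[i yi yE] Py]|].
    by exists (i, y i); rewrite // inE /= yi -yE.
  by case=> -[i v]; rewrite inE /= => /andP[vx Pv] ->; rewrite adjacent_upd.
rewrite card_in_imset.
  under eq_bigr do rewrite -sum1_card.
  by rewrite pair_big_dep -sum1_card /=; apply: eq_bigl => -[i v]; rewrite !inE.
move=> [i v] [i' v']; rewrite !inE /= => /andP[vx _] /andP[vx' _] e.
have := congr1 (fun y : word => y i) e; rewrite /= !updE eqxx.
by case: (i =P i') => [<- -> //|_ vxi]; rewrite vxi eqxx in vx.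
Qed.

Lemma card_adjacentT x : #|[set y | adjacent x y]| = #|I| * q.-1.
Proof.
have -> : [set y | adjacent x y] = [set y | adjacent x y & predT y].
  by apply/setP=> y; rewrite !inE andbT.
rewrite card_adjacent -sum_nat_const; apply: eq_bigr => i _.
have -> : [set v | (v != x i) && predT (upd x i v)] = [set~ x i].
  by apply/setP=> v; rewrite !inE andbT.
by rewrite cardsC1 card_ord.
Qed.

Lemma card_adjacent_colors (g : word -> nat) x : (forall y, g y = 1 \/ g y = 2) ->
  #|[set y | adjacent x y & g y == 1]| + #|[set y | adjacent x y & g y == 2]|
  = #|I| * q.-1.
Proof.
move=> g12; rewrite -(card_adjacentT x) -cardsUI.
have -> : [set y | adjacent x y & g y == 1] :&: [set y | adjacent x y & g y == 2] = set0.
  by apply/setP=> y; rewrite !inE; case: (adjacent x y); case: (g y == 1) / eqP => // ->.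
rewrite cards0 addn0; apply: eq_card => y; rewrite !inE -andb_orr.
by case: (g12 y) => ->; rewrite ?andbT.
Qed.

Lemma card_ball1 x : #|[set y | #|mismatch x y| <= 1]| = (#|I| * q.-1).+1.
Proof.
have -> : [set y | #|mismatch x y| <= 1] = x |: [set y | adjacent x y].
  by apply/setP=> y; rewrite !inE -ball1E.
by rewrite cardsU1 card_adjacentT inE /adjacent mismatchxx cards0.
Qed.

Lemma coloring_c_gt0 b c (f : word -> nat) : coloring b c f -> 0 < c.
Proof.
move=> [f12 [[x1 fx1] [[x2 fx2] [_ fc]]]].
suff [x [y [xy fx fy]]] : exists x y, [/\ adjacent x y, f x = 1 & f y = 2].
  rewrite -(fc y fy) card_gt0; apply/set0Pn; exists x.
  by rewrite inE adjacentC xy fx eqxx.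
move: {2}#|mismatch x1 x2| (erefl #|mismatch x1 x2|) => d dx1.
elim: d x1 fx1 dx1 => [|d IH] x fx dx.
  by move/eqP: dx; rewrite cards_eq0 mismatch_eq0 => /eqP xx2; rewrite xx2 fx2 in fx.
have [i xi] : exists i, i \in mismatch x x2 by apply/set0Pn; rewrite -card_gt0 dx.
have x2i : x2 i != x i by move: xi; rewrite inE eq_sym.
case: (f12 (upd x i (x2 i))) => fy; last by exists x, (upd x i (x2 i)); rewrite adjacent_upd.
apply: (IH _ fy); apply/eqP; rewrite -eqSS -dx (cardsD1 i (mismatch x x2)) xi eqSS; apply/eqP.
by apply: eq_card => j; rewrite !inE updE; case: (j =P i) => [->|]; rewrite ?eqxx.
Qed.

End Hamming.

Section Isometry.
Variables (I J : finType) (q : nat) (phi : {ffun J -> 'I_q} -> {ffun I -> 'I_q}).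
Hypotheses (phi_bij : bijective phi)
  (phi_isometry : forall x y, #|mismatch (phi x) (phi y)| = #|mismatch x y|).

Lemma card_preim_iso (P : pred {ffun I -> 'I_q}) :
  #|[set y | P (phi y)]| = #|[set z | P z]|.
Proof.
rewrite -(on_card_preimset (onW_bij _ phi_bij)).
by apply: eq_card => y; rewrite !inE.
Qed.

Lemma coloring_iso b c g : coloring b c g -> coloring b c (g \o phi).
Proof.
have [phi' phiK phi'K] := phi_bij.
have nbrE x K : #|[set y | adjacent x y & g (phi y) == K]|
                = #|[set z | adjacent (phi x) z & g z == K]|.
  rewrite -card_preim_iso; apply: eq_card => y; rewrite !inE.
  by rewrite /adjacent phi_isometry.
move=> [g12 [[x1 gx1] [[x2 gx2] [gb gc]]]]; split; first by move=> x; exact: g12.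
split; first by exists (phi' x1); rewrite /= phi'K.
split; first by exists (phi' x2); rewrite /= phi'K.
by split=> x gx; rewrite nbrE; [apply: gb | apply: gc].
Qed.

Lemma perfect_iso C : perfect C -> perfect (phi @^-1: C).
Proof.
move=> pC x; rewrite -(pC (phi x)) -card_preim_iso; apply: eq_card => y.
by rewrite !inE !ball1E phi_isometry.
Qed.

End Isometry.

Lemma hamming_iso (I J : finType) q : #|I| = #|J| ->
  exists phi : {ffun J -> 'I_q} -> {ffun I -> 'I_q},
    bijective phi /\ forall x y, #|mismatch (phi x) (phi y)| = #|mismatch x y|.
Proof.
move=> IJ; pose e (i : I) : J := enum_val (cast_ord IJ (enum_rank i)).
have e_inj : injective e by move=> i i' /enum_val_inj/cast_ord_inj/enum_rank_inj.
have e_bij := inj_card_bij e_inj (eq_leq (esym IJ)); have [e' eK e'K] := e_bij.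
exists (fun y => [ffun i => y (e i)]); split.
  exists (fun x : {ffun I -> 'I_q} => [ffun j => x (e' j)]) => [y|x];
  by apply/ffunP => k; rewrite !ffunE ?e'K ?eK.
move=> x y; rewrite -(on_card_preimset (onW_bij _ e_bij)).
by apply: eq_card => i; rewrite !inE !ffunE.
Qed.

(** * Perfect codes *)

Section PerfectCode.
Variables (I : finType) (q : nat) (C : {set {ffun I -> 'I_q}}).
Hypothesis C_perfect : perfect C.

Lemma perfect_code_eq c c' : c \in C -> c' \in C -> #|mismatch c c'| <= 2 -> c = c'.
Proof.
move=> cC c'C cc'2; case: (eqVneq c c') => //.
rewrite -mismatch_eq0 => /set0Pn[i cc'i].
pose w := upd c i (c' i).
have wc : #|mismatch w c| <= 1.
  by rewrite mismatchC mismatch_upd ?cards1 //; move: cc'i; rewrite inE eq_sym.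
have wc' : #|mismatch w c'| <= 1.
  rewrite -ltnS; apply: leq_trans cc'2; rewrite (cardsD1 i (mismatch c c')) cc'i ltnS.
  apply: subset_leq_card; apply/subsetP=> j; rewrite !inE updE.
  by case: (j =P i) => [->|_]; rewrite ?eqxx.
have /eqP/cards1P[z Bz] := C_perfect w.
have inB y : y \in C -> #|mismatch w y| <= 1 -> y = z.
  by move=> yC wy; apply/set1P; rewrite -Bz inE yC ball1E.
by rewrite (inB c cC wc) (inB c' c'C wc').
Qed.

Lemma perfect_code_card : #|C| * (#|I| * q.-1).+1 = q ^ #|I|.
Proof.
have -> : q ^ #|I| = \sum_(x : {ffun I -> 'I_q}) #|[set y in C | (y == x) || adjacent x y]|.
  by rewrite (eq_bigr (fun=> 1)) // sum1_card card_ffun card_ord.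
rewrite -sum_nat_const (eq_bigr _ (fun c _ => esym (card_ball1 c))).
under eq_bigr do rewrite card_set_sum.
rewrite exchange_big; apply: eq_bigr => x _.
rewrite -sum1_card big_mkcond [RHS]big_mkcond; apply: eq_bigr => y _.
by rewrite !inE ball1E mismatchC; case: (y \in C).
Qed.

(* Puncturing at i1 and i2 is injective on C by [perfect_code_eq], and C has q^(q-1) words,
   so the punctured code is all of H(q-1, q). *)
Lemma perfect_code_decode i1 i2 : #|I| = q.+1 -> i1 != i2 ->
  forall x : {ffun I -> 'I_q},
  exists2 c, c \in C & forall i, i \notin [set i1; i2] -> c i = x i.
Proof.
move=> cardI i12 x; have q_gt0 : 0 < q by apply: leq_ltn_trans (ltn_ord (x i1)).
pose P := {i : I | i \notin [set i1; i2]}.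
pose punct (y : {ffun I -> 'I_q}) : {ffun P -> 'I_q} := [ffun i => y (val i)].
have punct_inj : {in C &, injective punct}.
  move=> c c' cC c'C /ffunP cc'; apply: perfect_code_eq => //.
  apply: (@leq_trans #|[set i1; i2]|); last by rewrite cards2 i12.
  apply/subset_leq_card/subsetP => i; rewrite inE; apply: contraR => iD.
  by have := cc' (Sub i iD); rewrite !ffunE SubK => ->.
have cardC : #|C| = q ^ q.-1.
  have sq : (q.+1 * q.-1).+1 = q ^ 2 by rewrite expnS expn1; nia.
  apply/eqP; rewrite -(eqn_pmul2r (_ : 0 < q ^ 2)) ?expn_gt0 ?q_gt0 //.
  rewrite -sq -cardI perfect_code_card cardI sq -expnD; apply/eqP; congr (_ ^ _); lia.
have cardP : #|{: P}| = q.-1.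
  rewrite card_sig; transitivity #|~: [set i1; i2]|.
    by apply: eq_card => i; rewrite !inE.
  by rewrite cardsCs setCK cards2 i12 cardI subSS subn1.
have : punct x \in punct @: C.
  suff -> : punct @: C = setT by rewrite in_setT.
  apply/eqP; rewrite eqEcard subsetT cardsT card_ffun card_ord card_in_imset //=.
  by rewrite cardP cardC.
case/imsetP=> c cC /ffunP xc; exists c => // i iD.
by have := xc (Sub i iD); rewrite !ffunE.
Qed.

End PerfectCode.

(** * Block codes *)

Section BlockCode.
Variables (p : nat) (A : finType).
Local Notation q := p.+1.
Local Notation block := {ffun A -> 'I_q}.
Implicit Types (x y : block) (sg tu : block -> 'I_q).

Definition block_code sg tu :=
  (forall x y, adjacent x y -> sg x != sg y) /\
  (forall x, {in [set y | adjacent x y] &, injective (fun y => (sg y, tu y))}).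

Lemma card_block_nbrs sg tu : #|A| = q -> block_code sg tu ->
  forall x (P : pred ('I_q * 'I_q)),
  #|[set y | adjacent x y & P (sg y, tu y)]| = #|[set su | (su.1 != sg x) && P su]|.
Proof.
move=> cardA [sg_adj sgtu_inj] x P; pose phi y := (sg y, tu y).
have phiN : phi @: [set y | adjacent x y] = [set su | su.1 != sg x].
  apply/eqP; rewrite eqEcard; apply/andP; split.
    by apply/subsetP=> _ /imsetP[y + ->]; rewrite !inE => xy; rewrite eq_sym sg_adj.
  rewrite card_in_imset // card_adjacentT cardA.
  have -> : [set su : 'I_q * 'I_q | su.1 != sg x] = setX [set~ sg x] setT.
    by apply/setP=> su; rewrite !inE andbT.
  by rewrite cardsX cardsC1 cardsT !card_ord mulnC.
rewrite -(card_in_imset (f := phi)); last first.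
  by move=> y y'; rewrite !inE => /andP[xy _] /andP[xy' _]; apply: (sgtu_inj x); rewrite inE.
apply: eq_card => su; rewrite [in RHS]inE; apply/imsetP/andP => [[y]|[su1 Psu]].
  rewrite inE => /andP[xy Py] ->; split=> //.
  by rewrite eq_sym sg_adj.
have : su \in phi @: [set y | adjacent x y] by rewrite phiN inE.
by case/imsetP=> y; rewrite inE => xy suE; exists y; rewrite // inE xy -/(phi y) -suE.
Qed.

Lemma block_code_sg_surj sg tu :
  #|A| = q -> block_code sg tu -> forall s, exists x, sg x = s.
Proof.
move=> cardA sgtu s; pose x0 : block := [ffun=> s].
case: (eqVneq (sg x0) s) => [|sgx0]; first by exists x0.
have := card_block_nbrs cardA sgtu x0 (fun su => su.1 == s).
have -> : [set su : 'I_q * 'I_q | (su.1 != sg x0) && (su.1 == s)] = setX [set s] setT.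
  apply/setP=> su; rewrite !inE andbT.
  by case: (su.1 =P s) => [->|]; rewrite ?andbF // eq_sym sgx0.
rewrite cardsX cards1 cardsT card_ord mul1n => nbrs.
have /set0Pn[y] : [set y | adjacent x0 y & sg y == s] != set0 by rewrite -card_gt0 nbrs.
by rewrite inE => /andP[_ /eqP]; exists y.
Qed.

End BlockCode.

Section BlockCodeOfPerfectCode.
Variables (p : nat) (A : finType) (a1 : A).
Local Notation q := p.+1.
Local Notation block := {ffun A -> 'I_q}.
Variable C : {set {ffun option A -> 'I_q}}.
Hypotheses (cardA : #|A| = q) (C_perfect : perfect C).
Implicit Types (x y : block).

(* Blocks are extended by a coordinate [None]; [decode x] is the codeword agreeing with
   [extend x] off [Some a1] and [None] (the default of the [pick] is never used). *)
Definition extend x : {ffun option A -> 'I_q} :=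
  [ffun o => if o is Some a then x a else 0%R].

Definition decode x : {ffun option A -> 'I_q} :=
  odflt (extend x) [pick c in C |
    [forall o, (o \notin [set Some a1; None]) ==> (c o == extend x o)]].

Lemma decode_spec x : decode x \in C /\ forall a, a != a1 -> decode x (Some a) = x a.
Proof.
have [c cC cx] : exists2 c, c \in C &
    forall o, o \notin [set Some a1; None] -> c o = extend x o.
  by apply: perfect_code_decode => //; rewrite card_option cardA.
rewrite /decode; case: pickP => [c' /andP[c'C /forallP c'x] | /(_ c)]; last first.
  by rewrite cC /=; move/negP; case; apply/forallP=> o; apply/implyP=> o_out; rewrite cx.
split=> // a aa1; have := c'x (Some a); rewrite !inE /= ffunE.
by rewrite orbF (inj_eq Some_inj) aa1 => /eqP.
Qed.

Definition code_sg x : 'I_q := (x a1 + decode x (Some a1))%R.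
Definition code_tu x : 'I_q := decode x None.

Lemma mismatch_decode x y : code_sg x = code_sg y ->
  mismatch (decode x) (decode y) \subset None |: [set Some a | a in mismatch x y].
Proof.
move=> sgxy; apply/subsetP=> -[a|] //; rewrite !inE => dxy; last by rewrite eqxx.
apply/imsetP; exists a => //; rewrite inE; apply: contra dxy => /eqP xya.
have [_ dx] := decode_spec x; have [_ dy] := decode_spec y.
case: (eqVneq a a1) => [aa1|aa1]; last by rewrite dx // dy // xya.
by move: sgxy; rewrite /code_sg -aa1 xya => /addrI ->.
Qed.

Lemma decode_inj x y : decode x = decode y -> code_sg x = code_sg y -> x = y.
Proof.
move=> dxy sgxy; apply/ffunP=> a; have [_ dx] := decode_spec x; have [_ dy] := decode_spec y.
case: (eqVneq a a1) => [->|aa1]; last by rewrite -dx // -dy // dxy.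
by move: sgxy; rewrite /code_sg dxy => /addIr.
Qed.

Lemma decode_eq x y : #|mismatch (decode x) (decode y)| <= 2 -> decode x = decode y.
Proof.
by have [xC _] := decode_spec x; have [yC _] := decode_spec y; apply: perfect_code_eq.
Qed.

Lemma code_block_code : block_code code_sg code_tu.
Proof.
split=> [x y xy | x y y'].
  apply/eqP=> sgxy; have dxy : decode x = decode y.
    apply: decode_eq; apply: leq_trans (subset_leq_card (mismatch_decode sgxy)) _.
    by rewrite cardsU1 card_imset ?(eqP xy); [case: (_ \notin _) | exact: Some_inj].
  by move: xy; rewrite /adjacent (decode_inj dxy sgxy) mismatchxx cards0.
rewrite !inE => xy xy' yy'; have [/= sgyy' /= tuyy'] := (congr1 fst yy', congr1 snd yy').
apply: (@decode_inj y y' _ sgyy'); apply: decode_eq.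
have sub : mismatch (decode y) (decode y') \subset [set Some a | a in mismatch y y'].
  apply/subsetP=> o o_in; have := subsetP (mismatch_decode sgyy') o o_in.
  by rewrite !inE; case: eqP => // oN; move: o_in; rewrite oN inE -/(code_tu y) tuyy' eqxx.
apply: leq_trans (subset_leq_card sub) _; apply: leq_trans (leq_imset_card _ _) _.
apply: leq_trans (subset_leq_card (mismatch_triangle y x y')) _.
by rewrite mismatchC; apply: leq_trans (leq_card_setU _ _) _; rewrite (eqP xy) (eqP xy').
Qed.

End BlockCodeOfPerfectCode.

(** * Lifting colourings *)

(* [S x] is the set of free coordinates of the face through the colour-1 word [x]. *)
Definition face_directions (J : finType) q k (f : {ffun J -> 'I_q} -> nat)
    (S : {ffun J -> 'I_q} -> {set J}) :=
  (forall x, f x = 1 -> #|S x| = k) /\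
  (forall x i v, f x = 1 -> i \in S x -> f (upd x i v) = 1 /\ S (upd x i v) = S x).

Lemma face_directions_back (J : finType) q k f S (x : {ffun J -> 'I_q}) i v :
  face_directions k f S -> f (upd x i v) = 1 -> i \in S (upd x i v) -> f x = 1 /\ i \in S x.
Proof.
by move=> [_ fS] fy iy; have := fS _ i (x i) fy iy; rewrite upd_upd upd_id => -[-> ->].
Qed.

Lemma face_directions_of_partition n q k (f : hvert n q -> nat) :
  color1_face_partition k f -> exists S, face_directions k f S.
Proof.
move=> [P [/and3P[/eqP coverP trivP _] P_faces]].
pose face (T : {set 'I_n}) (a : hvert n q) :=
  [set x : hvert n q | [forall i, (i \notin T) ==> (x i == a i)]].
pose S (x : hvert n q) := odflt set0
  [pick T : {set 'I_n} | (#|T| == k) && [exists a, pblock P x == face T a]].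
have Bx x : f x = 1 -> pblock P x \in P /\ x \in pblock P x.
  by move=> fx; rewrite pblock_mem ?mem_pblock coverP inE fx.
have S_spec x : f x = 1 -> #|S x| = k /\ exists a, pblock P x = face (S x) a.
  move=> fx; rewrite /S; case: pickP => [T /andP[/eqP Tk /existsP[a /eqP Ba]] | noT] //=.
    by split=> //; exists a.
  have [T [a [Tk BTa]]] := P_faces _ (Bx x fx).1.
  move: (noT T); rewrite Tk eqxx /= => /negbT/negP; case.
  by apply/existsP; exists a; rewrite BTa.
exists S; split=> [x fx | x i v fx iS]; first by have [] := S_spec x fx.
have [_ [a Ba]] := S_spec x fx; have [BP xB] := Bx x fx.
have yB : upd x i v \in pblock P x.
  move: xB; rewrite Ba !inE => /forallP xa; apply/forallP=> j; apply/implyP=> jS.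
  by rewrite updE; case: (j =P i) => [ji|_]; [rewrite ji iS in jS | exact: (implyP (xa j))].
have By : pblock P (upd x i v) = pblock P x by apply: def_pblock.
split; last by rewrite /S By.
have : upd x i v \in cover P by rewrite -mem_pblock By.
by rewrite coverP inE => /eqP.
Qed.

Section Lift.
Variables (p : nat) (A J : finType) (m : nat).
Local Notation q := p.+1.
Local Notation K := ((J * A) + 'I_m)%type.
Local Notation word := {ffun K -> 'I_q}.
Variables (sg tu : {ffun A -> 'I_q} -> 'I_q).
Variables (f : {ffun J -> 'I_q} -> nat) (S : {ffun J -> 'I_q} -> {set J}) (t : nat).
Implicit Types (X : word) (T : {set J}).

Definition block X j : {ffun A -> 'I_q} := [ffun a => X (inl (j, a))].
Definition proj X : {ffun J -> 'I_q} := [ffun j => sg (block X j)].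
Definition weight X T : 'I_q :=
  (\sum_(j | j \notin T) tu (block X j) + \sum_l X (inr l))%R.
Definition lift X := if (f (proj X) == 1) && (weight X (S (proj X)) < t) then 1 else 2.
Definition lift_dirs X : {set K} := [set inl ja | ja in setX (S (proj X)) [set: A]].

Lemma block_upd_inl X j a v j' :
  block (upd X (inl (j, a)) v) j' = if j' == j then upd (block X j) a v else block X j'.
Proof.
apply/ffunP=> a'; case: (j' =P j) => [->|/eqP j'j]; rewrite !ffunE.
  by rewrite (inj_eq inl_inj) xpair_eqE eqxx.
by rewrite (inj_eq inl_inj) xpair_eqE (negbTE j'j).
Qed.

Lemma block_upd_inr X l v j : block (upd X (inr l) v) j = block X j.
Proof. by apply/ffunP=> a; rewrite !ffunE. Qed.

Lemma proj_upd_inl X j a v :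
  proj (upd X (inl (j, a)) v) = upd (proj X) j (sg (upd (block X j) a v)).
Proof. by apply/ffunP=> j'; rewrite updE !ffunE block_upd_inl; case: (j' == j). Qed.

Lemma proj_upd_inr X l v : proj (upd X (inr l) v) = proj X.
Proof. by apply/ffunP=> j; rewrite !ffunE block_upd_inr. Qed.

Lemma weight_upd_in X T j a v : j \in T -> weight (upd X (inl (j, a)) v) T = weight X T.
Proof.
move=> jT; rewrite /weight; congr (_ + _)%R.
  apply: eq_bigr => j' j'T; rewrite block_upd_inl.
  by case: eqP => // j'j; rewrite j'j jT in j'T.
by apply: eq_bigr => l _; rewrite updE.
Qed.

Lemma weight_setU1 X T j : j \notin T -> weight X T = (tu (block X j) + weight X (j |: T))%R.
Proof.
move=> jT; rewrite /weight (bigD1 j jT) /= addrA; congr (_ + _ + _)%R.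
by apply: eq_bigl => i; rewrite !inE negb_or andbC.
Qed.

Lemma weight_upd_out X T j a v : j \notin T ->
  weight (upd X (inl (j, a)) v) T = (tu (upd (block X j) a v) + weight X (j |: T))%R.
Proof.
by move=> jT; rewrite (weight_setU1 _ jT) block_upd_inl eqxx weight_upd_in // setU11.
Qed.

Lemma weight_upd_inr X T l : exists R, forall v, weight (upd X (inr l) v) T = (R + v)%R.
Proof.
exists (\sum_(j | j \notin T) tu (block X j) + \sum_(l' | l' != l) X (inr l'))%R => v.
rewrite /weight (bigD1 l) //= updE eqxx addrCA [RHS]addrC; congr (_ + (_ + _))%R.
  by apply: eq_bigr => j _; rewrite block_upd_inr.
by apply: eq_bigr => i /negbTE il; rewrite updE (inj_eq inr_inj) il.
Qed.

(* The colour of [X] after replacing its block [j] by a block [y] with [sg y = s] and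
   [tu y = u]. *)
Definition lift_after X j s u :=
  let x := upd (proj X) j s in
  let w := if j \in S x then weight X (S x) else (u + weight X (j |: S x))%R in
  if (f x == 1) && (w < t) then 1 else 2.

Lemma lift_upd_inl X j a v :
  lift (upd X (inl (j, a)) v)
  = lift_after X j (sg (upd (block X j) a v)) (tu (upd (block X j) a v)).
Proof.
rewrite /lift /lift_after proj_upd_inl.
case: (boolP (j \in S _)) => jS; first by rewrite weight_upd_in.
by rewrite weight_upd_out.
Qed.

Definition ones_along (x : {ffun J -> 'I_q}) j :=
  #|[set s | (s != x j) && (f (upd x j s) == 1)]|.

Variables (b c k : nat).
Hypotheses (cardA : #|A| = q) (sgtu : block_code sg tu) (t_le : t <= q).
Hypotheses (f_col : coloring b c f) (f_faces : face_directions k f S).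

Lemma card_block_ones X j :
  \sum_a #|[set v | (v != X (inl (j, a))) && (lift (upd X (inl (j, a)) v) == 1)]|
  = if (f (proj X) == 1) && (j \in S (proj X)) then p * q * (lift X == 1)
    else t * ones_along (proj X) j.
Proof.
have -> : \sum_a #|[set v | (v != X (inl (j, a))) && (lift (upd X (inl (j, a)) v) == 1)]|
          = \sum_s #|[set u | (s != proj X j) && (lift_after X j s u == 1)]|.
  rewrite -(card_pairs (fun s u => (s != proj X j) && (lift_after X j s u == 1))) ffunE.
  rewrite -(card_block_nbrs cardA sgtu _ (fun su => lift_after X j su.1 su.2 == 1)).
  rewrite card_adjacent.
  by apply: eq_bigr => a _; apply: eq_card => v; rewrite !inE !ffunE lift_upd_inl.
case: ifP => [/andP[/eqP fx jS] | free].
  rewrite -mulnA -[n in n * _](card_ord_neq (proj X j)) card_set_sum big_distrl /=.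
  apply: eq_bigr => s _.
  case: (eqVneq s (proj X j)) => [->|sx] /=.
    by apply/eqP; rewrite cards_eq0; apply/eqP/setP=> u; rewrite !inE.
  have [fy Sy] := f_faces.2 _ _ s fx jS.
  rewrite mul1n; transitivity #|[set u : 'I_q | lift X == 1]|.
    by apply: eq_card => u; rewrite !inE /lift_after /lift /= fy Sy jS fx eqxx.
  case: (lift X == 1) => /=.
    by rewrite muln1 -[q in RHS]card_ord; apply: eq_card => u; rewrite inE.
  by rewrite muln0 -(cards0 'I_q); apply: eq_card => u; rewrite !inE.
rewrite /ones_along card_set_sum big_distrr; apply: eq_bigr => s _ /=.
case: (eqVneq s (proj X j)) => [->|sx] /=.
  by apply/eqP; rewrite muln0 cards_eq0; apply/eqP/setP=> u; rewrite !inE.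
case: (boolP (f (upd (proj X) j s) == 1)) => [/eqP fy | nfy]; last first.
  apply/eqP; rewrite muln0 cards_eq0; apply/eqP/setP=> u.
  by rewrite !inE /lift_after /= (negbTE nfy).
have jy : j \notin S (upd (proj X) j s).
  apply/negP=> jy; have [/eqP fx jx] := face_directions_back f_faces fy jy.
  by rewrite fx jx in free.
rewrite muln1 -(card_shift_lt (weight X (j |: S (upd (proj X) j s))) t_le).
by apply: eq_card => u; rewrite !inE /lift_after /= fy eqxx (negbTE jy) addrC; case: ifP.
Qed.

Lemma card_extra_ones X l :
  #|[set v | (v != X (inr l)) && (lift (upd X (inr l) v) == 1)]|
  = (f (proj X) == 1) * (t - (lift X == 1)).
Proof.
have [R wR] := weight_upd_inr X (S (proj X)) l.
have liftE v : lift (upd X (inr l) v) = if (f (proj X) == 1) && ((R + v)%R < t) then 1 else 2.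
  by rewrite /lift proj_upd_inr wR.
case: (f (proj X) == 1) liftE => liftE; last first.
  by apply/eqP; rewrite mul0n cards_eq0; apply/eqP/setP=> v; rewrite !inE liftE andbF.
have liftX : (lift X == 1) = ((R + X (inr l))%R < t).
  by rewrite -[in LHS](upd_id X (inr l)) liftE; case: ifP.
rewrite mul1n liftX -[t in t - _](card_shift_lt R t_le).
rewrite (cardsD1 (X (inr l)) [set u | (R + u)%R < t]) inE addKn.
by apply: eq_card => v; rewrite !inE liftE /=; case: ifP.
Qed.

Lemma card_lift_ones_sum X :
  #|[set Y | adjacent X Y & lift Y == 1]|
  = \sum_j (if (f (proj X) == 1) && (j \in S (proj X)) then p * q * (lift X == 1)
            else t * ones_along (proj X) j)
    + m * ((f (proj X) == 1) * (t - (lift X == 1))).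
Proof.
rewrite card_adjacent big_sumType /=; congr (_ + _).
  rewrite -(eq_bigr _ (fun j _ => card_block_ones X j)) pair_big /=.
  by apply: eq_bigr => -[j a].
by rewrite (eq_bigr _ (fun l _ => card_extra_ones X l)) sum_nat_const card_ord.
Qed.

Lemma ones_along_face x j : f x = 1 -> j \in S x -> ones_along x j = p.
Proof.
move=> fx jS; rewrite -(card_ord_neq (x j)); apply: eq_card => s; rewrite !inE.
by have [-> _] := f_faces.2 x j s fx jS; rewrite eqxx andbT.
Qed.

Lemma sum_ones_along x : \sum_j ones_along x j = #|[set y | adjacent x y & f y == 1]|.
Proof. by rewrite card_adjacent. Qed.

(* m = k(q-1) - lambda, without subtraction. *)
Hypothesis m_def : k * p + b + c = #|J| * p + m.

Lemma sum_ones_along_free x : f x = 1 -> \sum_(j | j \notin S x) ones_along x j + m = c.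
Proof.
move=> fx; have [f12 [_ [_ [fb _]]]] := f_col.
have := card_adjacent_colors x f12; rewrite (fb x fx) -sum_ones_along (bigID (mem (S x))) /=.
rewrite (eq_bigr (fun=> p)) => [|j jS]; last exact: ones_along_face.
rewrite sum_nat_const (f_faces.1 x fx); set F := \sum_(j | _) _.
by move: m_def; set n := #|J|; lia.
Qed.

Lemma lift_12 X : lift X = 1 \/ lift X = 2.
Proof. by rewrite /lift; case: ifP; [left | right]. Qed.

Lemma lift_eq1 X : lift X = 1 -> f (proj X) = 1.
Proof. by rewrite /lift; case: ifP => // /andP[/eqP]. Qed.

Lemma card_lift_ones X :
  #|[set Y | adjacent X Y & lift Y == 1]|
  = if f (proj X) == 1 then k * (p * q * (lift X == 1)) + t * (c - m) + m * (t - (lift X == 1))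
    else t * c.
Proof.
have [f12 [_ [_ [_ fc]]]] := f_col.
rewrite card_lift_ones_sum; case: (boolP (f (proj X) == 1)) => [fx|nfx]; last first.
  have fx2 : f (proj X) = 2 by case: (f12 (proj X)) => // fx; rewrite fx in nfx.
  rewrite mul0n muln0 addn0 -(fc _ fx2) -sum_ones_along big_distrr /=.
  by apply: eq_bigr.
rewrite (bigID (mem (S (proj X)))) /= mul1n.
rewrite (eq_bigr (fun=> p * q * (lift X == 1))) => [|j jS]; last by rewrite jS.
rewrite sum_nat_const (f_faces.1 _ (eqP fx)).
rewrite (eq_bigr (fun j => t * ones_along (proj X) j)) => [|j /negbTE jS]; last by rewrite jS.
by rewrite -big_distrr /= -(sum_ones_along_free (eqP fx)) addnK.
Qed.

Hypothesis t_gt0 : 0 < t.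

Lemma lift_coloring : coloring (q * b + (q - t) * c) (t * c) lift.
Proof.
have [f12 [_ [[x2 fx2] [fb fc]]]] := f_col.
have ones2 X : lift X = 2 -> #|[set Y | adjacent X Y & lift Y == 1]| = t * c.
  move=> LX; rewrite card_lift_ones LX /=; case: ifP => // /eqP fx.
  rewrite !muln0 add0n subn0 [m * t]mulnC -mulnDr subnK //.
  by rewrite -(sum_ones_along_free fx) leq_addl.
have [X2 X2E] : exists X, proj X = x2.
  have bl s : exists y, sg y == s by have [y <-] := block_code_sg_surj cardA sgtu s; exists y.
  pose lifted (i : K) : 'I_q := if i is inl ja then xchoose (bl (x2 ja.1)) ja.2 else 0%R.
  exists [ffun i => lifted i].
  apply/ffunP=> j; rewrite ffunE -(eqP (xchooseP (bl (x2 j)))); congr sg.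
  by apply/ffunP=> a; rewrite !ffunE.
have LX2 : lift X2 = 2 by rewrite /lift X2E fx2.
split; first exact: lift_12.
split.
  have : 0 < #|[set Y | adjacent X2 Y & lift Y == 1]|.
    by rewrite ones2 // muln_gt0 t_gt0 (coloring_c_gt0 f_col).
  by rewrite card_gt0 => /set0Pn[Y]; rewrite inE => /andP[_ /eqP]; exists Y.
split; first by exists X2.
split=> X LX; last exact: ones2.
have fx := lift_eq1 LX; have := sum_ones_along_free fx.
have := card_adjacent_colors X lift_12; rewrite card_lift_ones fx LX eqxx /=.
rewrite card_sum card_prod cardA !card_ord.
move: m_def t_gt0 t_le; set n := #|J|; set Z := #|_|; set F := \sum_(j | _) _; nia.
Qed.

Lemma lift_faces : face_directions (k * q) lift lift_dirs.
Proof.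
split=> [X LX | X i v LX /imsetP[[j a]]].
  rewrite card_imset; last exact: inl_inj.
  by rewrite cardsX cardsT cardA (f_faces.1 _ (lift_eq1 LX)).
rewrite !inE /= andbT => jS ->.
have [fy Sy] := f_faces.2 _ j (sg (upd (block X j) a v)) (lift_eq1 LX) jS.
split; last by rewrite /lift_dirs proj_upd_inl Sy.
by rewrite lift_upd_inl /lift_after /= fy Sy jS; move: (LX); rewrite /lift (lift_eq1 LX).
Qed.

End Lift.

Lemma iterated_lift p (A : finType) (sg tu : {ffun A -> 'I_p.+1} -> 'I_p.+1) (ts : seq nat) :
  #|A| = p.+1 -> block_code sg tu -> all (fun t => 0 < t <= p.+1) ts ->
  forall (J : finType) b c k m (f : {ffun J -> 'I_p.+1} -> nat) S,
  coloring b c f -> face_directions k f S -> k * p + b + c = #|J| * p + m ->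
  exists (I : finType) (g : {ffun I -> 'I_p.+1} -> nat) b' c',
    [/\ coloring b' c' g, #|I| = p.+1 ^ size ts * #|J| + m * \sum_(i < size ts) p.+1 ^ i,
        b' + c' = p.+1 ^ size ts * (b + c) & c' = (\prod_(t <- ts) t) * c].
Proof.
move=> cardA sgtu; elim: ts => [|t ts IH] /=.
  move=> _ J b c k m f S f_col _ _; exists J, f, b, c.
  by rewrite big_ord0 big_nil muln0 addn0 !mul1n.
case/andP=> /andP[t_gt0 t_le] ts_ok J b c k m f S f_col f_faces m_def.
have g_col := lift_coloring cardA sgtu t_le f_col f_faces m_def t_gt0.
have g_faces := lift_faces m sg tu t cardA f_faces.
have cardK : #|{: (J * A) + 'I_m}| = #|J| * p.+1 + m.
  by rewrite card_sum card_prod cardA card_ord.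
have [|I [g [b' [c' [g'_col cardI bc' c'E]]]]] := IH ts_ok _ _ _ _ m _ _ g_col g_faces.
  by rewrite cardK; move: m_def t_le; set n := #|J|; nia.
exists I, g, b', c'; split=> //.
- by rewrite cardI cardK big_ord_recr /= expnS; nia.
- by rewrite bc' expnS; move: t_le; nia.
- by rewrite c'E big_cons mulnA [t * _]mulnC.
Qed.

Lemma geometric_sum q r : 1 < q -> (q ^ r - 1) %/ (q - 1) = \sum_(i < r) q ^ i.
Proof. by case: q => [|[|p]] // _; rewrite !subn1 predn_exp mulKn. Qed.

Lemma main_eigenvalue_iterate p n b c k m r b' c' :
  k * p + b + c = n * p + m -> b' + c' = p.+1 ^ r * (b + c) ->
  main_eigenvalue (p.+1 ^ r * n + m * \sum_(i < r) p.+1 ^ i) p.+1 b' c'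
  = (main_eigenvalue n p.+1 b c + (k * (p.+1 - 1) * (p.+1 ^ r - 1))%:Z)%R.
Proof.
rewrite /main_eigenvalue subn1 /= => m_def ->.
set Q := p.+1 ^ r; set G := \sum_(i < r) _.
have GQ : p * G = Q - 1 by rewrite subn1 /Q predn_exp.
have Q_gt0 : 0 < Q by rewrite expn_gt0.
have : (Q * n + m * G) * p + (b + c) = n * p + k * p * (Q - 1) + Q * (b + c).
  by move: m_def GQ Q_gt0; nia.
set X := (Q * n + m * G) * p; set Y := Q * (b + c); set Z := k * p * (Q - 1); lia.
Qed.

Theorem corollary1 (q n b c k : nat) (f : hvert n q -> nat) :
  (1 < q)%N ->
  (exists C : {set hvert q.+1 q}, perfect_code C) ->
  is_coloring b c f ->
  color1_face_partition k f ->
  (main_eigenvalue n q b c <= (k * (q - 1))%:Z)%R ->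
  forall (r : nat) (t : 'I_r -> nat),
    (0 < r)%N ->
    (forall i, 1 <= t i <= q)%N ->
    let T := (\prod_(i < r) t i)%N in
    let lam := main_eigenvalue n q b c in
    forall N : nat,
      (N%:Z = (q ^ r * n)%:Z
              + ((k * (q - 1))%:Z - lam) * ((q ^ r - 1) %/ (q - 1))%:Z)%R ->
      exists (b' c' : nat) (g : hvert N q -> nat),
        is_coloring b' c' g /\
        (b'%:Z = (q ^ r * (b + c))%:Z - (T * c)%:Z)%R /\
        c' = (T * c)%N /\
        main_eigenvalue N q b' c' = (lam + (k * (q - 1) * (q ^ r - 1))%:Z)%R.
Proof.
case: q f => [//|p] f p_gt1 [C C_perfect] f_col f_part lam_le r t _ t_range T lam N NE.
have cardO : #|'I_p.+2| = #|{: option 'I_p.+1}| by rewrite card_option !card_ord.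
have [phi [phi_bij phi_iso]] := @hamming_iso _ _ p.+1 cardO.
have code := code_block_code ord0 (card_ord p.+1) (perfect_iso phi_bij phi_iso C_perfect).
have [S f_faces] := face_directions_of_partition f_part.
pose m := k * p + b + c - n * p.
have m_def : k * p + b + c = #|'I_n| * p + m.
  by rewrite card_ord /m; move: lam_le; rewrite /main_eigenvalue subn1 /=; lia.
have ts_ok : all (fun x => 0 < x <= p.+1) [seq t i | i <- enum 'I_r].
  by apply/allP=> _ /mapP[i _ ->]; exact: t_range.
have [I [g [b' [c' [g_col cardI bc' c'E]]]]] :=
  iterated_lift (card_ord p.+1) code ts_ok f_col f_faces m_def.
rewrite size_map size_enum_ord big_map big_enum /= -/T card_ord in cardI bc' c'E m_def.
have NI : N = #|I|.
  have mE : ((k * (p.+1 - 1))%:Z - lam = m%:Z)%R.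
    by move: lam_le; rewrite /lam /main_eigenvalue /m subn1 /=; lia.
  by move: NE; rewrite mE geometric_sum // cardI -PoszM -PoszD => -[].
have cardIN : #|I| = #|'I_N| by rewrite card_ord NI.
have [psi [psi_bij psi_iso]] := @hamming_iso _ _ p.+1 cardIN.
exists b', c', (g \o psi); split; first exact: (coloring_iso psi_bij psi_iso g_col).
split; first by rewrite -c'E -bc' PoszD addrK.
by split=> //; rewrite NI cardI /lam (main_eigenvalue_iterate m_def bc').
Qed.
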